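(* A matrix is a slack matrix of a polyhedral cone if and only if it is a slack matrix of some pointed polyhedral cone.
   Context: A matrix $S\in\mathbb{R}^{p\times q}$ is a slack matrix of a polyhedral cone $K\subseteq\mathbb{R}^n$ if there are $A\in\mathbb{R}^{p\times n}$, $B\in\mathbb{R}^{n\times q}$ with $K=\{x\in\mathbb{R}^n: x^TB\ge 0\}=\{y^TA: y\in\mathbb{R}_+^p\}$ and $S=AB$. A cone is pointed if its lineality space (the largest linear subspace it contains) is $\{0\}$. *)

From HB Require Import structures.
From mathcomp Require Import all_boot all_order all_algebra.
From mathcomp Require Import reals.
Set Implicit Arguments. Unset Strict Implicit. Unset Printing Implicit Defensive.
Import Order.TTheory GRing.Theory Num.Theory.
Local Open Scope ring_scope.

Definition slack_matrix_of (R : realType) (n p q : nat)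
    (K : 'rV[R]_n -> Prop) (S : 'M[R]_(p, q)) : Prop :=
  exists (A : 'M[R]_(p, n)) (B : 'M[R]_(n, q)),
    (forall x : 'rV[R]_n, K x <-> (forall j : 'I_q, 0 <= (x *m B) 0 j)) /\
    (forall x : 'rV[R]_n,
        K x <-> exists y : 'rV[R]_p, (forall i : 'I_p, 0 <= y 0 i) /\ x = y *m A) /\
    S = A *m B.

(* K is pointed: its lineality space (the largest linear subspace it
   contains) is {0}, i.e. every linear subspace (row space of a matrix U)
   contained in K is the zero subspace. *)
Definition pointed (R : realType) (n : nat) (K : 'rV[R]_n -> Prop) : Prop :=
  forall U : 'M[R]_n, (forall v : 'rV[R]_n, (v <= U)%MS -> K v) -> U = 0.

From HB Require Import structures.
From mathcomp Require Import all_boot all_order all_algebra.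
From mathcomp Require Import reals.
Set Implicit Arguments. Unset Strict Implicit. Unset Printing Implicit Defensive.
Import Order.TTheory GRing.Theory Num.Theory.
Local Open Scope ring_scope.

(* Factor B = C D through its column space, with C of full column rank and D of
   full row rank.  The inequalities x B >= 0 then only see x C, so x ranges over
   the cone {z | z D >= 0} in R^(rank B), whose generators are the rows of A C
   and whose slack matrix is A C D = A B.  Its lineality space {z | z D = 0} is
   trivial because D has independent rows. *)

Section PolyhedralCones.

Variable R : realType.

Definition hcone (n q : nat) (D : 'M[R]_(n, q)) (x : 'rV[R]_n) : Prop :=
  forall j : 'I_q, 0 <= (x *m D) 0 j.

Definition vcone (p n : nat) (A : 'M[R]_(p, n)) (x : 'rV[R]_n) : Prop :=
  exists y : 'rV[R]_p, (forall i : 'I_p, 0 <= y 0 i) /\ x = y *m A.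

Lemma hcone_lineality (n q : nat) (D : 'M[R]_(n, q)) (v : 'rV[R]_n) :
  hcone D v -> hcone D (- v) -> v *m D = 0.
Proof.
move=> Dv Dnv; apply/matrixP => i j; rewrite (ord1 i) [RHS]mxE.
apply/eqP; rewrite eq_le Dv andbT.
by have := Dnv j; rewrite mulNmx mxE oppr_ge0.
Qed.

Lemma hcone_pointed (n q : nat) (D : 'M[R]_(n, q)) :
  row_free D -> pointed (hcone D).
Proof.
move=> freeD U sub_hcone; apply/row_matrixP => i; rewrite row0.
have Ui : (row i U <= U)%MS by exact: row_sub.
have Uni : (- row i U <= U)%MS by rewrite -scaleN1r scalemx_sub.
apply: (row_free_inj freeD); rewrite mul0mx.
exact: hcone_lineality (sub_hcone _ Ui) (sub_hcone _ Uni).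
Qed.

Lemma hconeM (m n q : nat) (C : 'M[R]_(m, n)) (D : 'M[R]_(n, q)) (x : 'rV[R]_m) :
  hcone (C *m D) x <-> hcone D (x *m C).
Proof. by split=> xCD j; have := xCD j; rewrite mulmxA. Qed.

Lemma slack_matrix_of_row_full (n r p q : nat) (K : 'rV[R]_n -> Prop)
    (A : 'M[R]_(p, n)) (C : 'M[R]_(n, r)) (D : 'M[R]_(r, q)) :
  row_full C -> (forall x, K x <-> hcone (C *m D) x) ->
  (forall x, K x <-> vcone A x) ->
  slack_matrix_of (hcone D) (A *m (C *m D)).
Proof.
case/row_fullP=> Ci CiC KC KA; exists (A *m C), D.
split=> //; split=> [z|]; last by rewrite mulmxA.
have zCiC : z *m Ci *m C = z by rewrite -mulmxA CiC mulmx1.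
split=> [Dz | [y [y_ge0 ->]]].
- have /KA [y [y_ge0 zCi]] : K (z *m Ci) by apply/KC/hconeM; rewrite zCiC.
  by exists y; rewrite mulmxA -zCi zCiC.
- rewrite mulmxA; apply/hconeM/KC/KA.
  by exists y.
Qed.

End PolyhedralCones.

Theorem lemma2p10 (R : realType) (p q : nat) (S : 'M[R]_(p, q)) :
  (exists (n : nat) (K : 'rV[R]_n -> Prop), slack_matrix_of K S) <->
  (exists (n : nat) (K : 'rV[R]_n -> Prop), pointed K /\ slack_matrix_of K S).
Proof.
split=> [[n [K [A [B [KB [KA ->]]]]]] | [n [K [_ slackS]]]]; last by exists n, K.
exists (\rank B), (hcone (row_base B)); split.
  exact/hcone_pointed/row_base_free.
rewrite -[B in A *m B]mulmx_base.
apply: slack_matrix_of_row_full (col_base_full B) _ KA.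
by move=> x; rewrite mulmx_base; exact: KB.
Qed.
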